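(* For every complete lattice $(\mathcal{L},\leq)$, the category $\mathbf{Graph}_{(\mathcal{L},\leq)}$ is strongly amendable.
   Context: A graph labeled from $\mathcal{L}$ consists of sets $V$, $E$, source and target functions $s,t : E \to V$, and label functions $\ell^V : V \to \mathcal{L}$, $\ell^E : E \to \mathcal{L}$. A premorphism $\phi : G \to G'$ is a pair $(\phi_V : V_G \to V_{G'}, \phi_E : E_G \to E_{G'})$ with $s_{G'} \circ \phi_E = \phi_V \circ s_G$ and $t_{G'} \circ \phi_E = \phi_V \circ t_G$. For a complete lattice $(\mathcal{L},\leq)$, $\mathbf{Graph}_{(\mathcal{L},\leq)}$ has graphs labeled from $\mathcal{L}$ as objects and as morphisms the premorphisms $\phi$ with $\ell_G(x) \leq \ell_{G'}(\phi(x))$ for all $x \in V_G \cup E_G$. A category is amendable if for every morphism $t_L : L \to L'$ there is a factorization $t_L = \beta \circ t_L'$ with $t_L' : L \rightarrowtail L''$ mono such that for every factorization $t_L = \alpha \circ m$ with $m : L \rightarrowtail G_L$ mono there exists $\alpha' : G_L \to L''$ with $\alpha' \circ m = t_L'$ and $\beta \circ \alpha' = \alpha$; it is strongly amendable if the factorization $(t_L',\beta)$ can be chosen so that moreover, in each case, $L \xleftarrow{1_L} L \xrightarrow{m} G_L$ is a pullback of $t_L'$ and $\alpha'$. *)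

Set Implicit Arguments.
Unset Strict Implicit.

Record complete_lattice := CompleteLattice {
  lcar :> Type;
  lle : lcar -> lcar -> Prop;
  lle_refl : forall x, lle x x;
  lle_trans : forall x y z, lle x y -> lle y z -> lle x z;
  lle_antisym : forall x y, lle x y -> lle y x -> x = y;
  lcomplete : forall S : lcar -> Prop, exists s : lcar,
      (forall x, S x -> lle x s) /\
      (forall u, (forall x, S x -> lle x u) -> lle s u)
}.

#[local] Unset Implicit Arguments.
Record graph (L : Type) := Graph {
  gV : Type;
  gE : Type;
  gsrc : gE -> gV;
  gtgt : gE -> gV;
  glabV : gV -> L;
  glabE : gE -> L
}.
Arguments gV {L} g.
Arguments gE {L} g.
Arguments gsrc {L} g _.
Arguments gtgt {L} g _.
Arguments glabV {L} g _.
Arguments glabE {L} g _.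
#[local] Set Implicit Arguments.

Section Cat.
Variable CL : complete_lattice.
Local Notation L := (lcar CL).
Local Notation "x <= y" := (lle x y).

Record hom (G H : graph L) := Hom {
  homV : gV G -> gV H;
  homE : gE G -> gE H;
  hom_src : forall e, gsrc H (homE e) = homV (gsrc G e);
  hom_tgt : forall e, gtgt H (homE e) = homV (gtgt G e);
  hom_labV : forall v, glabV G v <= glabV H (homV v);
  hom_labE : forall e, glabE G e <= glabE H (homE e)
}.

Definition hom_eq (G H : graph L) (f g : hom G H) : Prop :=
  (forall v, homV f v = homV g v) /\ (forall e, homE f e = homE g e).

Definition hom_id (G : graph L) : hom G G.
Proof.
  refine (@Hom G G (fun v => v) (fun e => e) _ _ _ _);
    intros; solve [reflexivity | apply lle_refl].
Defined.

Definition hom_comp (G H K : graph L) (g : hom H K) (f : hom G H) : hom G K.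
Proof.
  refine (@Hom G K (fun v => homV g (homV f v)) (fun e => homE g (homE f e))
            _ _ _ _); intros.
  - rewrite hom_src, hom_src; reflexivity.
  - rewrite hom_tgt, hom_tgt; reflexivity.
  - eapply lle_trans; [apply hom_labV | apply hom_labV].
  - eapply lle_trans; [apply hom_labE | apply hom_labE].
Defined.

Definition mono (G H : graph L) (m : hom G H) : Prop :=
  forall (X : graph L) (f g : hom X G),
    hom_eq (hom_comp m f) (hom_comp m g) -> hom_eq f g.

Definition is_pullback (P A B C : graph L)
    (p : hom P A) (q : hom P B) (f : hom A C) (g : hom B C) : Prop :=
  hom_eq (hom_comp f p) (hom_comp g q) /\
  forall (X : graph L) (x : hom X A) (y : hom X B),
    hom_eq (hom_comp f x) (hom_comp g y) ->
    exists u : hom X P,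
      hom_eq (hom_comp p u) x /\ hom_eq (hom_comp q u) y /\
      forall u' : hom X P,
        hom_eq (hom_comp p u') x -> hom_eq (hom_comp q u') y -> hom_eq u' u.

Definition strongly_amendable : Prop :=
  forall (Lg L' : graph L) (tL : hom Lg L'),
    exists (L'' : graph L) (tL' : hom Lg L'') (beta : hom L'' L'),
      mono tL' /\ hom_eq tL (hom_comp beta tL') /\
      forall (GL : graph L) (m : hom Lg GL) (alpha : hom GL L'),
        mono m -> hom_eq tL (hom_comp alpha m) ->
        exists alpha' : hom GL L'',
          hom_eq (hom_comp alpha' m) tL' /\
          hom_eq (hom_comp beta alpha') alpha /\
          is_pullback (hom_id Lg) m tL' alpha'.

End Cat.

(* For tL : Lg -> L', take for L'' the vertices of Lg and of L', the edges of
   Lg, and one copy of each edge of L' for every choice of endpoints in L''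
   lying over its endpoints; beta : L'' -> L' is the evident projection and
   every item of L'' carries the label of its image under beta, the largest
   label beta allows.  A mono m : Lg -> GL is injective (test it against
   one-vertex and one-edge graphs labelled by the bottom of the lattice), so
   given alpha with tL = alpha m, alpha' can send the image of m back onto the
   copy of Lg and everything else along alpha, an edge going to the copy of its
   image whose endpoints are the images under alpha' of its endpoints.  As the
   copy of Lg is disjoint from the rest, its preimage under alpha' is exactly
   the image of m: this is the pullback property. *)
From Stdlib Require Import ClassicalEpsilon.
Set Implicit Arguments.
Unset Strict Implicit.

Section Monos.
Variable CL : complete_lattice.

Lemma lbot_exists : exists bot : lcar CL, forall l, lle bot l.
Proof.
  destruct (@lcomplete CL (fun _ => False)) as [bot [_ bot_least]].
  exists bot; intros l; apply bot_least; intros _ [].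
Qed.

Section TestGraphs.
Variables (bot : lcar CL) (bot_le : forall l, lle bot l).

Definition vertex_graph : graph CL :=
  @Graph CL unit Empty_set (fun e => match e with end) (fun e => match e with end)
    (fun _ => bot) (fun _ => bot).

Definition vertex_hom (G : graph CL) (v : gV G) : hom vertex_graph G :=
  @Hom CL vertex_graph G (fun _ => v) (fun e => match e with end)
    (fun e => match e with end) (fun e => match e with end)
    (fun _ => bot_le _) (fun e => match e with end).

Definition edge_graph : graph CL :=
  @Graph CL bool unit (fun _ => false) (fun _ => true) (fun _ => bot) (fun _ => bot).

Definition edge_hom (G : graph CL) (e : gE G) : hom edge_graph G :=
  @Hom CL edge_graph G (fun b : bool => if b then gtgt G e else gsrc G e)
    (fun _ => e) (fun _ => eq_refl) (fun _ => eq_refl)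
    (fun _ => bot_le _) (fun _ => bot_le _).

End TestGraphs.

Lemma mono_injV (G H : graph CL) (m : hom G H) :
  mono m -> forall a b, homV m a = homV m b -> a = b.
Proof.
  intros m_mono a b Eab; destruct lbot_exists as [bot bot_le].
  assert (Heq : hom_eq (hom_comp m (vertex_hom bot_le a))
                       (hom_comp m (vertex_hom bot_le b))).
  { split; [intros v; exact Eab | intros e; case e]. }
  exact (proj1 (m_mono _ _ _ Heq) tt).
Qed.

Lemma mono_injE (G H : graph CL) (m : hom G H) :
  mono m -> forall a b, homE m a = homE m b -> a = b.
Proof.
  intros m_mono a b Eab; destruct lbot_exists as [bot bot_le].
  assert (Heq : hom_eq (hom_comp m (edge_hom bot_le a))
                       (hom_comp m (edge_hom bot_le b))).
  { split; [intros [|]; simpl | intros u; exact Eab].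
    - rewrite <- !hom_tgt, Eab; reflexivity.
    - rewrite <- !hom_src, Eab; reflexivity. }
  exact (proj2 (m_mono _ _ _ Heq) tt).
Qed.

Lemma injective_mono (G H : graph CL) (m : hom G H) :
  (forall a b, homV m a = homV m b -> a = b) ->
  (forall a b, homE m a = homE m b -> a = b) -> mono m.
Proof.
  intros injV injE X f g [HV HE]; split; intros x; [apply injV, HV | apply injE, HE].
Qed.

End Monos.

Section SplitImage.
Variables (A B C : Type) (f : A -> B) (g : B -> C).

Definition split_image (b : B) : A + C :=
  match excluded_middle_informative (exists a, f a = b) with
  | left H => inl (proj1_sig (constructive_indefinite_description _ H))
  | right _ => inr (g b)
  end.

Lemma split_image_spec b :
  (exists a, f a = b /\ split_image b = inl a) \/ split_image b = inr (g b).
Proof.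
  unfold split_image; destruct excluded_middle_informative as [H|_]; [left|now right].
  destruct constructive_indefinite_description as [a fa_b]; eauto.
Qed.

Lemma split_image_inl b a : split_image b = inl a -> f a = b.
Proof.
  destruct (split_image_spec b) as [[a' [fa'_b ->]] | ->]; [|discriminate].
  now intros [= <-].
Qed.

Lemma split_image_f :
  (forall a a', f a = f a' -> a = a') -> forall a, split_image (f a) = inl a.
Proof.
  intros f_inj a; unfold split_image.
  destruct excluded_middle_informative as [H|H].
  - destruct constructive_indefinite_description as [a' fa'_fa]; simpl.
    now rewrite (f_inj _ _ fa'_fa).
  - exfalso; apply H; now exists a.
Qed.

End SplitImage.

Section Amendment.
Variables (CL : complete_lattice) (Lg L' : graph CL) (tL : hom Lg L').

Definition amend_vertex : Type := (gV Lg + gV L')%type.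

Definition amend_projV (x : amend_vertex) : gV L' :=
  match x with inl a => homV tL a | inr v => v end.

Record amend_new_edge := AmendNewEdge {
  ne_edge : gE L';
  ne_src : amend_vertex;
  ne_tgt : amend_vertex;
  ne_src_over : amend_projV ne_src = gsrc L' ne_edge;
  ne_tgt_over : amend_projV ne_tgt = gtgt L' ne_edge
}.

Definition amend_edge : Type := (gE Lg + amend_new_edge)%type.

Definition amend_src (x : amend_edge) : amend_vertex :=
  match x with inl e => inl (gsrc Lg e) | inr n => ne_src n end.

Definition amend_tgt (x : amend_edge) : amend_vertex :=
  match x with inl e => inl (gtgt Lg e) | inr n => ne_tgt n end.

Definition amend_projE (x : amend_edge) : gE L' :=
  match x with inl e => homE tL e | inr n => ne_edge n end.

Definition amend_graph : graph CL :=
  @Graph CL amend_vertex amend_edge amend_src amend_tgt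
    (fun x => glabV L' (amend_projV x)) (fun x => glabE L' (amend_projE x)).

Definition amend_proj : hom amend_graph L'.
Proof.
  refine (@Hom CL amend_graph L' amend_projV amend_projE _ _ _ _).
  - intros [e|n]; [apply hom_src | exact (eq_sym (ne_src_over n))].
  - intros [e|n]; [apply hom_tgt | exact (eq_sym (ne_tgt_over n))].
  - intros x; apply lle_refl.
  - intros x; apply lle_refl.
Defined.

Definition amend_inj : hom Lg amend_graph :=
  @Hom CL Lg amend_graph inl inl (fun _ => eq_refl) (fun _ => eq_refl)
    (hom_labV tL) (hom_labE tL).

Lemma amend_inj_mono : mono amend_inj.
Proof. apply injective_mono; intros a b Eab; now injection Eab. Qed.

Lemma amend_factor : hom_eq tL (hom_comp amend_proj amend_inj).
Proof. split; reflexivity. Qed.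

Section Lift.
Variables (GL : graph CL) (m : hom Lg GL) (alpha : hom GL L').
Hypotheses (m_mono : mono m) (alpha_m : hom_eq tL (hom_comp alpha m)).

Definition amend_liftV : gV GL -> amend_vertex := split_image (homV m) (homV alpha).

Lemma amend_liftV_m a : amend_liftV (homV m a) = inl a.
Proof. exact (split_image_f _ (mono_injV m_mono) a). Qed.

Lemma amend_liftV_inl v a : amend_liftV v = inl a -> homV m a = v.
Proof. apply split_image_inl. Qed.

Lemma amend_projV_liftV v : amend_projV (amend_liftV v) = homV alpha v.
Proof.
  unfold amend_liftV; destruct (split_image_spec (homV m) (homV alpha) v) as [[a [<- ->]] | ->].
  - exact (proj1 alpha_m a).
  - reflexivity.
Qed.

Definition new_edge_of (e : gE GL) : amend_new_edge :=
  @AmendNewEdge (homE alpha e) (amend_liftV (gsrc GL e)) (amend_liftV (gtgt GL e))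
    (eq_trans (amend_projV_liftV _) (eq_sym (hom_src alpha e)))
    (eq_trans (amend_projV_liftV _) (eq_sym (hom_tgt alpha e))).

Definition amend_liftE : gE GL -> amend_edge := split_image (homE m) new_edge_of.

Lemma amend_liftE_m a : amend_liftE (homE m a) = inl a.
Proof. exact (split_image_f _ (mono_injE m_mono) a). Qed.

Lemma amend_liftE_inl e a : amend_liftE e = inl a -> homE m a = e.
Proof. apply split_image_inl. Qed.

Lemma amend_src_liftE e : amend_src (amend_liftE e) = amend_liftV (gsrc GL e).
Proof.
  unfold amend_liftE; destruct (split_image_spec (homE m) new_edge_of e) as [[a [<- ->]] | ->].
  - simpl; now rewrite hom_src, amend_liftV_m.
  - reflexivity.
Qed.

Lemma amend_tgt_liftE e : amend_tgt (amend_liftE e) = amend_liftV (gtgt GL e).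
Proof.
  unfold amend_liftE; destruct (split_image_spec (homE m) new_edge_of e) as [[a [<- ->]] | ->].
  - simpl; now rewrite hom_tgt, amend_liftV_m.
  - reflexivity.
Qed.

Lemma amend_projE_liftE e : amend_projE (amend_liftE e) = homE alpha e.
Proof.
  unfold amend_liftE; destruct (split_image_spec (homE m) new_edge_of e) as [[a [<- ->]] | ->].
  - exact (proj2 alpha_m a).
  - reflexivity.
Qed.

Definition amend_lift : hom GL amend_graph.
Proof.
  refine (@Hom CL GL amend_graph amend_liftV amend_liftE
            amend_src_liftE amend_tgt_liftE _ _).
  - intros v; simpl; rewrite amend_projV_liftV; apply hom_labV.
  - intros e; simpl; rewrite amend_projE_liftE; apply hom_labE.
Defined.

Lemma amend_lift_m : hom_eq (hom_comp amend_lift m) amend_inj.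
Proof. split; [exact amend_liftV_m | exact amend_liftE_m]. Qed.

Lemma amend_proj_lift : hom_eq (hom_comp amend_proj amend_lift) alpha.
Proof. split; [exact amend_projV_liftV | exact amend_projE_liftE]. Qed.

Lemma amend_lift_pullback : is_pullback (hom_id Lg) m amend_inj amend_lift.
Proof.
  split.
  - split; intros a; symmetry; [exact (amend_liftV_m a) | exact (amend_liftE_m a)].
  - intros X x y [HV HE]; exists x; split; [|split].
    + split; reflexivity.
    + split; intros w.
      * exact (amend_liftV_inl (eq_sym (HV w))).
      * exact (amend_liftE_inl (eq_sym (HE w))).
    + intros u' [UV UE] _; split; [exact UV | exact UE].
Qed.

End Lift.
End Amendment.

Theorem lemma6 : forall CL : complete_lattice, strongly_amendable CL.
Proof.
  intros CL Lg L' tL.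
  exists (amend_graph tL), (amend_inj tL), (amend_proj tL).
  split; [apply amend_inj_mono | split; [apply amend_factor |]].
  intros GL m alpha m_mono alpha_m.
  exists (amend_lift m_mono alpha_m).
  split; [apply amend_lift_m | split; [apply amend_proj_lift | apply amend_lift_pullback]].
Qed.
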